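(* Let $M\in\mathbb{R}^{p\times q}_+$ be a nonnegative matrix whose entries sum to $1$, and let $k\ge1$. The following are equivalent: (i) there exist $A_1,\dots,A_p,B_1,\dots,B_q\in\mathcal{S}^k_+$ with $M_{ij}=\langle A_i,B_j\rangle$ for all $i,j$; (ii) there exist $F_1,\dots,F_p\in\mathcal{S}^k_+$ with $\sum_{i=1}^pF_i=I_k$, $G_1,\dots,G_q\in\mathcal{S}^k_+$ with $\sum_{j=1}^qG_j=I_k$, and $\rho\in\mathcal{S}^{k^2}_+$ with $\operatorname{trace}(\rho)=1$, such that \[ M_{ij}=\operatorname{trace}\big((F_i\otimes G_j)\rho\big)\quad\text{for all } i=1,\dots,p,\ j=1,\dots,q, \] where $\otimes$ denotes the Kronecker product.
   Context: $\mathcal{S}^k_+$ denotes the cone of $k\times k$ real symmetric positive semidefinite matrices, $\langle A,B\rangle=\operatorname{trace}(AB)$, and $I_k$ is the $k\times k$ identity matrix. *)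

(* Scalars: an arbitrary real closed field R (covers the reals). *)
From HB Require Import structures.
From mathcomp Require Import all_boot all_order all_algebra.
Set Implicit Arguments. Unset Strict Implicit. Unset Printing Implicit Defensive.
Import Order.TTheory GRing.Theory Num.Theory.
Local Open Scope ring_scope.

Definition psd (R : realFieldType) (k : nat) (A : 'M[R]_k) : Prop :=
  A^T = A /\ forall v : 'cV[R]_k, 0 <= (v^T *m A *m v) 0 0.

(* Kronecker product: row index of A (x) B is the pair (i1,i2) : 'I_m1 * 'I_m2
   flattened lexicographically (i1 major), i.e. i1 * m2 + i2, as in mxvec. *)
Definition kron (R : pzRingType) (m1 n1 m2 n2 : nat)
  (A : 'M[R]_(m1, n1)) (B : 'M[R]_(m2, n2)) : 'M[R]_(m1 * m2, n1 * n2) :=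
  \matrix_(a, b)
    let ii := enum_val (cast_ord (esym (mxvec_cast m1 m2)) a) in
    let jj := enum_val (cast_ord (esym (mxvec_cast n1 n2)) b) in
    A ii.1 jj.1 * B ii.2 jj.2.

(* (ii) -> (i): take A_i = F_i and B_j = Tr_2 (rho (I (x) G_j)); then
   tr ((F (x) G) rho) = tr (F B), and B_j is psd because its quadratic form is
   tr (G_j X) for a psd contraction X of rho.
   (i) -> (ii): symmetric Gaussian elimination followed by scaling gives a
   congruence taking sum_i A_i to a 0/1 diagonal projection, whence
   A_i = W1 F_i W1^T with sum_i F_i = I.  Normalising the psd family
   W1^T B_j W1 the same way yields M_ij = tr (F_i W G_j W^T), which is
   tr ((F_i (x) G_j) rho) for the rank-one rho = vec(W) vec(W)^T, and
   tr rho = tr (W W^T) = sum_ij M_ij = 1. *)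

From HB Require Import structures.
From mathcomp Require Import all_boot all_order all_algebra.
From mathcomp Require Import ring lra.
Import Order.TTheory GRing.Theory Num.Theory.
Local Open Scope ring_scope.
Set Implicit Arguments. Unset Strict Implicit. Unset Printing Implicit Defensive.

Section EntrywiseExpansions.
Variable R : pzSemiRingType.

Lemma quad_formE n (A : 'M[R]_n) (v : 'cV[R]_n) :
  (v^T *m A *m v) 0 0 = \sum_a \sum_b v a 0 * A a b * v b 0.
Proof.
rewrite mxE exchange_big /=; apply: eq_bigr => b _; rewrite mxE mulr_suml.
by apply: eq_bigr => a _; rewrite mxE.
Qed.

Lemma mxtrace_mulmxE m n (A : 'M[R]_(m, n)) (B : 'M[R]_(n, m)) :
  \tr (A *m B) = \sum_a \sum_b A a b * B b a.
Proof. by apply: eq_bigr => a _; rewrite mxE. Qed.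

End EntrywiseExpansions.

Lemma kron_mxvec_index (R : pzRingType) m1 n1 m2 n2
    (F : 'M[R]_(m1, n1)) (G : 'M[R]_(m2, n2)) i1 i2 j1 j2 :
  kron F G (mxvec_index i1 i2) (mxvec_index j1 j2) = F i1 j1 * G i2 j2.
Proof. by rewrite /kron mxE /mxvec_index !cast_ordK !enum_rankK. Qed.

Lemma big_mxvec_index (V : nmodType) m n (f : 'I_(m * n) -> V) :
  \sum_c f c = \sum_i \sum_j f (mxvec_index i j).
Proof.
rewrite pair_big /= (reindex (uncurry (@mxvec_index m n))) /=; last exact: curry_mxvec_bij.
by apply: eq_bigr => -[].
Qed.

Lemma exchange_big_pair (V : nmodType) (I J K L : finType) (f : I -> J -> K -> L -> V) :
  \sum_i \sum_j \sum_k \sum_l f i j k l = \sum_k \sum_l \sum_i \sum_j f i j k l.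
Proof.
under eq_bigr do rewrite exchange_big /=.
rewrite exchange_big /=; apply: eq_bigr => k _.
under eq_bigr do rewrite exchange_big /=.
by rewrite exchange_big.
Qed.

Section PsdCone.
Variable R : realFieldType.

Lemma psd_congr m n (P : 'M[R]_(m, n)) (A : 'M[R]_n) : psd A -> psd (P *m A *m P^T).
Proof.
case=> As Ap; split; first by rewrite !trmx_mul trmxK As mulmxA.
by move=> v; have := Ap (P^T *m v); rewrite trmx_mul trmxK !mulmxA.
Qed.

Lemma psd0 n : psd (0 : 'M[R]_n).
Proof. by split=> [|v]; rewrite ?trmx0 // mulmx0 mul0mx mxE. Qed.

Lemma psdD n (A B : 'M[R]_n) : psd A -> psd B -> psd (A + B).
Proof.
case=> As Ap [Bs Bp]; split; first by rewrite linearD /= As Bs.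
by move=> v; rewrite mulmxDr mulmxDl mxE addr_ge0.
Qed.

Lemma psdZ n (c : R) (A : 'M[R]_n) : 0 <= c -> psd A -> psd (c *: A).
Proof.
move=> c0 [As Ap]; split; first by rewrite linearZ /= As.
by move=> v; rewrite -scalemxAr -scalemxAl mxE mulr_ge0.
Qed.

Lemma psd_sum n (I : finType) (F : I -> 'M[R]_n) :
  (forall i, psd (F i)) -> psd (\sum_i F i).
Proof. by move=> PF; apply: big_ind => //; [exact: psd0 | exact: psdD]. Qed.

Lemma psd_diag_mx n (r : 'rV[R]_n) : (forall a, 0 <= r 0 a) -> psd (diag_mx r).
Proof.
move=> r_ge0; split=> [|v]; first by rewrite tr_diag_mx.
rewrite mul_mx_diag mxE; apply: sumr_ge0 => a _; rewrite !mxE.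
by rewrite mulrAC -expr2 mulr_ge0 ?sqr_ge0.
Qed.

Lemma psd_trmx_mul m n (X : 'M[R]_(m, n)) : psd (X^T *m X).
Proof.
have := psd_congr X^T (psd_diag_mx (r := const_mx 1) _).
by rewrite diag_const_mx mulmx1 trmxK; apply=> a; rewrite mxE ler01.
Qed.

Lemma quad_form_delta n (A : 'M[R]_n) a b :
  ((delta_mx a 0 : 'cV[R]_n)^T *m A *m delta_mx b 0) = (A a b)%:M.
Proof.
apply/matrixP=> i j; rewrite !ord1 trmx_delta -rowE -colE !mxE.
by rewrite eqxx mulr1n.
Qed.

Lemma psd_diag_ge0 n (A : 'M[R]_n) a : psd A -> 0 <= A a a.
Proof. by case=> _ /(_ (delta_mx a 0)); rewrite quad_form_delta mxE eqxx mulr1n. Qed.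

Lemma psd_sym n (A : 'M[R]_n) a b : psd A -> A a b = A b a.
Proof. by case=> As _; rewrite -{1}As mxE. Qed.

(* Otherwise the quadratic form is negative at [t e_l + e_b] for a suitable [t]. *)
Lemma psd_row_eq0 n (A : 'M[R]_n) l b : psd A -> A l l = 0 -> A l b = 0.
Proof.
move=> PA All; have [//|x_neq0] := eqVneq (A l b) 0; exfalso.
set x := A l b in x_neq0; pose t := - (A b b + 1) / (2 * x).
have := PA.2 (t *: delta_mx l 0 + delta_mx b 0).
rewrite !linearD !linearZ /= !mulmxDl -!scalemxAl.
rewrite !quad_form_delta !mxE !eqxx !mulr1n All (psd_sym _ _ PA) -/x.
have -> : t * (t * 0 + x) + (t * x + A b b) = 2 * x * t + A b b by ring.
rewrite /t mulrC -mulrA mulVf ?mulf_neq0 ?pnatr_eq0 // mulr1; lra.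
Qed.

End PsdCone.

Section Congruence.
Variables (R : comUnitRingType) (n : nat).
Implicit Types (w : 'cV[R]_n) (l : 'I_n).

Lemma congr_mulmx (Q P S : 'M[R]_n) :
  Q *m P *m S *m (Q *m P)^T = Q *m (P *m S *m P^T) *m Q^T.
Proof. by rewrite trmx_mul !mulmxA. Qed.

Lemma invmx_congrK (P X : 'M[R]_n) : P \in unitmx ->
  invmx P *m (P *m X *m P^T) *m (invmx P)^T = X.
Proof.
move=> Pu; rewrite trmx_inv !mulmxA mulVmx // mul1mx -mulmxA mulmxV ?unitmx_tr //.
exact: mulmx1.
Qed.

Definition elim_mx w l : 'M[R]_n := 1%:M - w *m delta_mx 0 l.

Lemma elim_mx_unit w l : w l 0 = 0 -> elim_mx w l \in unitmx.
Proof.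
move=> wl0; suff /mulmx1_unit[] : elim_mx w l *m (1%:M + w *m delta_mx 0 l) = 1%:M by [].
have e_w : delta_mx (0 : 'I_1) l *m w = 0.
  by rewrite -rowE; apply/matrixP=> i j; rewrite !ord1 !mxE wl0.
rewrite mulmxBl !mulmxDr !mulmx1 !mul1mx -!mulmxA (mulmxA (delta_mx 0 l)) e_w.
by rewrite mul0mx mulmx0 addr0 addrK.
Qed.

Lemma elim_mx_congrE w l (T : 'M[R]_n) a b :
  (elim_mx w l *m T *m (elim_mx w l)^T) a b
    = T a b - w a 0 * T l b - (T a l - w a 0 * T l l) * w b 0.
Proof.
rewrite /elim_mx linearB /= trmx1 trmx_mul trmx_delta.
rewrite mulmxBl mul1mx -mulmxA -rowE mulmxBr mulmx1 !mulmxA -colE.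
by rewrite !mxE !big_ord1 !mxE big_ord1 !mxE.
Qed.

End Congruence.

Section CongruenceDiagonalization.
Variables (R : realFieldType) (n : nat).
Implicit Types (S T : 'M[R]_n).

Definition offdiag_row0 T a := forall b, b != a -> T a b = 0.

(* One step of symmetric Gaussian elimination with pivot [T l l]. *)
Lemma psd_clear_row T l : psd T ->
  exists2 E : 'M[R]_n, E \in unitmx &
    offdiag_row0 (E *m T *m E^T) l /\
    forall a, offdiag_row0 T a -> offdiag_row0 (E *m T *m E^T) a.
Proof.
move=> PT; have [Tll0|Tll_neq0] := eqVneq (T l l) 0.
  exists 1%:M; rewrite ?unitmx1 // trmx1 mulmx1 mul1mx.
  by split=> // b _; exact: psd_row_eq0.
pose w : 'cV[R]_n := \col_a (T a l / T l l - (a == l)%:R).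
have wl0 : w l 0 = 0 by rewrite mxE eqxx divff // subrr.
have wE a : a != l -> w a 0 = T a l / T l l by move=> /negPf al; rewrite mxE al subr0.
have El : offdiag_row0 (elim_mx w l *m T *m (elim_mx w l)^T) l.
  move=> b bl; rewrite elim_mx_congrE wl0 !mul0r !subr0 wE //.
  by rewrite [T l l * _]mulrC divfK // (psd_sym _ _ PT) subrr.
exists (elim_mx w l); first exact: elim_mx_unit.
split=> // a Ta0; have [->|al] := eqVneq a l; first exact: El.
move=> b ba; rewrite elim_mx_congrE wE // (Ta0 l) 1?eq_sym // (Ta0 b) // !mul0r.
by rewrite subrr mul0r subrr.
Qed.

Lemma psd_congr_diag S : psd S ->
  exists2 P : 'M[R]_n, P \in unitmx & is_diag_mx (P *m S *m P^T).
Proof.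
move=> PS; suff /(_ n (leqnn n)) [P Pu P_diag] : forall m, (m <= n)%N ->
    exists2 P : 'M[R]_n, P \in unitmx &
      forall a : 'I_n, (a < m)%N -> offdiag_row0 (P *m S *m P^T) a.
  exists P => //; apply/is_diag_mxP => a b ab.
  by apply: (P_diag a (ltn_ord a)); apply: contra ab => /eqP->.
elim=> [|m IHm] lt_mn.
  by exists 1%:M; rewrite ?unitmx1.
have [P Pu P_diag] := IHm (ltnW lt_mn).
have [E Eu [El E_diag]] := psd_clear_row (Ordinal lt_mn) (psd_congr P PS).
exists (E *m P); first by rewrite unitmx_mul Eu.
move=> a; rewrite congr_mulmx ltnS leq_eqVlt => /orP[/eqP a_m | a_lt_m].
  by have -> : a = Ordinal lt_mn by exact: val_inj.
exact/E_diag/P_diag.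
Qed.

Lemma mxtrace_psd_mul_ge0 (G X : 'M[R]_n) : psd G -> psd X -> 0 <= \tr (G *m X).
Proof.
move=> PG PX; have [P Pu /diag_mxP[r Dr]] := psd_congr_diag PG.
have PD : psd (diag_mx r) by rewrite -Dr; exact: psd_congr.
have PY : psd ((invmx P)^T *m X *m (invmx P)^T^T) by exact: psd_congr.
have -> : \tr (G *m X) = \tr (diag_mx r *m ((invmx P)^T *m X *m (invmx P)^T^T)).
  by rewrite -[G](invmx_congrK _ Pu) Dr trmxK -!mulmxA mxtrace_mulC !mulmxA.
rewrite mul_diag_mx /mxtrace; apply: sumr_ge0 => a _; rewrite mxE.
apply: mulr_ge0; last exact: psd_diag_ge0.
by have := psd_diag_ge0 a PD; rewrite mxE eqxx mulr1n.
Qed.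

End CongruenceDiagonalization.

Section Normalization.
Variables (R : rcfType) (n : nat).
Implicit Types (d : 'I_n -> bool) (A S : 'M[R]_n).

Definition diag01 d : 'M[R]_n := diag_mx (\row_a (d a)%:R).

Lemma psd_diag01 d : psd (diag01 d).
Proof. by apply: psd_diag_mx => a; rewrite mxE ler0n. Qed.

Lemma diag01D_compl d : diag01 d + diag01 (fun a => ~~ d a) = 1%:M.
Proof.
apply/matrixP=> a b; rewrite !mxE.
by case: (d a); case: (a == b); rewrite ?mulr1n ?mulr0n ?addr0 ?add0r.
Qed.

Lemma diag01_mul_compl d : diag01 d *m diag01 (fun a => ~~ d a) = 0.
Proof.
rewrite mul_diag_mx; apply/matrixP=> a b; rewrite !mxE.
by case: (d a); rewrite ?mul0r // mul0rn mulr0.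
Qed.

Lemma diag01_psd_mask d A : psd A -> (forall a, ~~ d a -> A a a = 0) ->
  diag01 d *m A *m diag01 d = A.
Proof.
move=> PA A0; rewrite mul_mx_diag mul_diag_mx; apply/matrixP=> a b; rewrite !mxE.
case da : (d a); case db : (d b); rewrite ?mulr1 ?mul1r ?mulr0 ?mul0r //.
- by rewrite (psd_sym _ _ PA) psd_row_eq0 // A0 ?db.
- by rewrite psd_row_eq0 // A0 ?da.
- by rewrite psd_row_eq0 // A0 ?da.
Qed.

Lemma psd_congr_diag01 S : psd S ->
  exists2 P : 'M[R]_n, P \in unitmx & exists d, P *m S *m P^T = diag01 d.
Proof.
move=> PS; have [P Pu /diag_mxP[r Dr]] := psd_congr_diag PS.
have r_ge0 a : 0 <= r 0 a.
  by have := psd_diag_ge0 a (psd_congr P PS); rewrite Dr mxE eqxx mulr1n.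
pose s : 'rV[R]_n := \row_a (if r 0 a == 0 then 1 else (Num.sqrt (r 0 a))^-1).
have sqrt_r_neq0 a : r 0 a != 0 -> Num.sqrt (r 0 a) != 0.
  by move=> ra; rewrite sqrtr_eq0 -ltNge lt_def ra r_ge0.
exists (diag_mx s *m P).
  rewrite unitmx_mul Pu andbT unitmxE det_diag unitfE; apply/prodf_neq0 => a _.
  by rewrite mxE; case: ifPn => [_|ra]; rewrite ?oner_neq0 ?invr_neq0 ?sqrt_r_neq0.
exists (fun a => r 0 a != 0).
rewrite congr_mulmx Dr tr_diag_mx mul_diag_mx mul_mx_diag; apply/matrixP => a b; rewrite !mxE.
have [<-|ab] := eqVneq a b; last by rewrite !mulr0n mulr0 mul0r.
rewrite !mulr1n; case: ifPn => [/eqP->|ra]; first by rewrite mulr0 mul0r.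
rewrite -{2}(sqr_sqrtr (r_ge0 a)) expr2 mulrA mulVf ?mul1r ?mulfV //; exact: sqrt_r_neq0.
Qed.

(* Congruence by [P] turns [\sum_i X i] into a 0/1 diagonal projection
   [diag01 d]; padding [Y i0] with the complementary projection makes the
   family sum to the identity, while [diag01 d] still absorbs every
   [P *m X i *m P^T]. *)
Lemma psd_sum_normalize (I : finType) (i0 : I) (X : I -> 'M[R]_n) :
  (forall i, psd (X i)) ->
  exists (W : 'M[R]_n) (Y : I -> 'M[R]_n),
    [/\ forall i, psd (Y i), \sum_i Y i = 1%:M & forall i, X i = W *m Y i *m W^T].
Proof.
move=> PX; have [P Pu [d Pi_eq]] := psd_congr_diag01 (psd_sum PX).
pose A i := P *m X i *m P^T.
have PA i : psd (A i) by exact: psd_congr.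
have sumA : \sum_i A i = diag01 d by rewrite -Pi_eq mulmx_sumr mulmx_suml.
have A_mask i a : ~~ d a -> A i a a = 0.
  move=> da; apply/eqP; rewrite eq_le psd_diag_ge0 // andbT.
  have : \sum_j A j a a = 0 by rewrite -summxE sumA !mxE (negbTE da) mul0rn.
  rewrite (bigD1 i) //= => <-; rewrite lerDl.
  by apply: sumr_ge0 => j _; exact: psd_diag_ge0.
pose Y i := A i + (i == i0)%:R *: diag01 (fun a => ~~ d a).
exists (invmx P *m diag01 d), Y; split.
- by move=> i; apply/psdD/psdZ/psd_diag01; rewrite ?ler0n.
- rewrite big_split /= sumA -scaler_suml (bigD1 i0) //= eqxx big1 => [|j /negPf->//].
  by rewrite addr0 scale1r diag01D_compl.
move=> i; have PiYPi : diag01 d *m Y i *m diag01 d = A i.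
  rewrite mulmxDr mulmxDl -scalemxAr -scalemxAl diag01_mul_compl mul0mx scaler0.
  by rewrite addr0 diag01_psd_mask //; exact: A_mask.
transitivity (invmx P *m (diag01 d *m Y i *m diag01 d) *m (invmx P)^T).
  by rewrite PiYPi invmx_congrK.
by rewrite trmx_mul tr_diag_mx !mulmxA.
Qed.

End Normalization.

Section KronContraction.
Variables (R : realFieldType) (m n : nat).

(* The partial trace Tr_2 (rho (I (x) G)), written out entrywise. *)
Definition ptrace_kron (G : 'M[R]_n) (rho : 'M[R]_(m * n)) : 'M[R]_m :=
  \matrix_(b1, a1) \sum_a2 \sum_b2 G a2 b2 * rho (mxvec_index b1 b2) (mxvec_index a1 a2).

Lemma mxtrace_kron_mul (F : 'M[R]_m) (G : 'M[R]_n) rho :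
  \tr (kron F G *m rho) = \tr (F *m ptrace_kron G rho).
Proof.
rewrite !mxtrace_mulmxE big_mxvec_index; apply: eq_bigr => a1 _.
under eq_bigr do rewrite big_mxvec_index.
rewrite exchange_big /=; apply: eq_bigr => b1 _.
rewrite mxE mulr_sumr; apply: eq_bigr => a2 _.
rewrite mulr_sumr; apply: eq_bigr => b2 _.
by rewrite kron_mxvec_index mulrA.
Qed.

Lemma psd_ptrace_kron (G : 'M[R]_n) rho : psd G -> psd rho -> psd (ptrace_kron G rho).
Proof.
move=> PG Prho; split.
  apply/matrixP => b a; rewrite !mxE exchange_big /=.
  by apply: eq_big => // a2 _; apply: eq_bigr => b2 _; rewrite (psd_sym _ _ PG) (psd_sym _ _ Prho).
(* [v^T B v = tr (G X)] for [X] the contraction of [rho] with [v] on the first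
   factor, and [u^T X u = z^T rho z] for [z = v (x) u]. *)
move=> v; pose X : 'M[R]_n := \matrix_(b2, a2)
  \sum_b1 \sum_a1 v b1 0 * rho (mxvec_index b1 b2) (mxvec_index a1 a2) * v a1 0.
have -> : (v^T *m ptrace_kron G rho *m v) 0 0 = \tr (G *m X).
  rewrite quad_formE mxtrace_mulmxE.
  under eq_bigr do under eq_bigr do rewrite mxE mulr_sumr mulr_suml.
  under eq_bigr do under eq_bigr do under eq_bigr do rewrite mulr_sumr mulr_suml.
  rewrite exchange_big_pair; apply: eq_bigr => a2 _; apply: eq_bigr => b2 _.
  rewrite mxE mulr_sumr; apply: eq_bigr => b1 _; rewrite mulr_sumr.
  by apply: eq_bigr => a1 _; rewrite !mulrA [v b1 0 * _]mulrC.
apply: mxtrace_psd_mul_ge0 => //; split.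
  apply/matrixP => b a; rewrite !mxE exchange_big /=.
  by apply: eq_bigr => a1 _; apply: eq_bigr => b1 _; rewrite (psd_sym _ _ Prho) mulrAC [RHS]mulrC mulrA.
move=> u; pose z := (mxvec (v *m u^T))^T.
have zE b1 b2 : z (mxvec_index b1 b2) 0 = v b1 0 * u b2 0.
  by rewrite mxE mxvecE mxE big_ord1 mxE.
suff -> : (u^T *m X *m u) 0 0 = (z^T *m rho *m z) 0 0 by exact: Prho.2.
rewrite !quad_formE [RHS]big_mxvec_index [RHS]exchange_big /=; apply: eq_bigr => b2 _.
under [RHS]eq_bigr do rewrite big_mxvec_index exchange_big /=.
rewrite [RHS]exchange_big /=; apply: eq_bigr => a2 _.
rewrite mxE mulr_sumr mulr_suml; apply: eq_bigr => b1 _.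
rewrite mulr_sumr mulr_suml; apply: eq_bigr => a1 _.
by rewrite !zE; ring.
Qed.

End KronContraction.

Section KronRankOne.
Variables (R : comPzRingType) (m n : nat) (W : 'M[R]_(m, n)).

Lemma mxtrace_mxvec_mul : \tr ((mxvec W)^T *m mxvec W) = \tr (W *m W^T).
Proof.
rewrite mxtrace_mulC /mxtrace big_ord1 mxE big_mxvec_index; apply: eq_bigr => i _.
by rewrite mxE; apply: eq_bigr => j _; rewrite !mxE mxvecE.
Qed.

Lemma mxtrace_kron_mxvec (F : 'M[R]_m) (G : 'M[R]_n) :
  \tr (kron F G *m ((mxvec W)^T *m mxvec W)) = \tr (F *m W *m G^T *m W^T).
Proof.
rewrite !mxtrace_mulmxE big_mxvec_index; apply: eq_bigr => a1 _; apply: eq_bigr => a2 _.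
rewrite big_mxvec_index !mxE mulr_suml exchange_big /=; apply: eq_bigr => b2 _.
rewrite !mxE !mulr_suml; apply: eq_bigr => b1 _.
by rewrite kron_mxvec_index !mxE !big_ord1 !mxE !mxvecE; ring.
Qed.

End KronRankOne.

Lemma psd_pair_normalize (R : rcfType) n (I J : finType) (i0 : I) (j0 : J)
    (A : I -> 'M[R]_n) (B : J -> 'M[R]_n) :
  (forall i, psd (A i)) -> (forall j, psd (B j)) ->
  exists (F : I -> 'M[R]_n) (G : J -> 'M[R]_n) (W : 'M[R]_n),
    [/\ forall i, psd (F i), \sum_i F i = 1%:M, forall j, psd (G j), \sum_j G j = 1%:M
      & forall i j, \tr (A i *m B j) = \tr (F i *m (W *m G j *m W^T))].
Proof.
move=> PA PB; have [W1 [F [PF sumF A_eq]]] := psd_sum_normalize i0 PA.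
have PC j : psd (W1^T *m B j *m W1) by have := psd_congr W1^T (PB j); rewrite trmxK.
have [W [G [PG sumG C_eq]]] := psd_sum_normalize j0 PC.
exists F, G, W; split=> // i j.
by rewrite -C_eq A_eq -!mulmxA mxtrace_mulC !mulmxA.
Qed.

Lemma big_ord2_neq0_gt0 (V : nmodType) p q (f : 'I_p -> 'I_q -> V) :
  \sum_i \sum_j f i j != 0 -> (0 < p)%N /\ (0 < q)%N.
Proof.
case: p f => [|p] f; first by rewrite big_ord0 eqxx.
case: q f => [|q] f //; rewrite big1 ?eqxx // => i _; exact: big_ord0.
Qed.

Theorem proposition3p7 (R : rcfType) (p q k : nat) (M : 'M[R]_(p, q))
  (HMnn : forall i j, 0 <= M i j)
  (HMsum : \sum_(i < p) \sum_(j < q) M i j = 1)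
  (Hk : (0 < k)%N) :
  (exists (A : 'I_p -> 'M[R]_k) (B : 'I_q -> 'M[R]_k),
      (forall i, psd (A i)) /\ (forall j, psd (B j)) /\
      (forall i j, M i j = \tr (A i *m B j)))
  <->
  (exists (F : 'I_p -> 'M[R]_k) (G : 'I_q -> 'M[R]_k) (rho : 'M[R]_(k * k)),
      (forall i, psd (F i)) /\ \sum_(i < p) F i = 1%:M /\
      (forall j, psd (G j)) /\ \sum_(j < q) G j = 1%:M /\
      psd rho /\ \tr rho = 1 /\
      (forall i j, M i j = \tr (kron (F i) (G j) *m rho))).
Proof.
split=> [[A [B [PA [PB M_eq]]]] | [F [G [rho [PF [_ [PG [_ [Prho [_ M_eq]]]]]]]]]].
  have [p_gt0 q_gt0] : (0 < p)%N /\ (0 < q)%N.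
    by apply: (big_ord2_neq0_gt0 (f := M)); rewrite HMsum oner_neq0.
  have [F [G [W [PF sumF PG sumG M_eqW]]]] :=
    psd_pair_normalize (Ordinal p_gt0) (Ordinal q_gt0) PA PB.
  have M_eqFG i j : M i j = \tr (F i *m (W *m G j *m W^T)) by rewrite M_eq M_eqW.
  exists F, G, ((mxvec W)^T *m mxvec W).
  do ![exact: psd_trmx_mul | split=> //].
  - rewrite mxtrace_mxvec_mul -HMsum.
    under eq_bigr do under eq_bigr do rewrite M_eqFG.
    under eq_bigr do rewrite -raddf_sum -mulmx_sumr -mulmx_suml -mulmx_sumr sumG mulmx1.
    by rewrite -raddf_sum -mulmx_suml sumF mul1mx.
  - by move=> i j; rewrite mxtrace_kron_mxvec (PG j).1 M_eqFG !mulmxA.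
exists F, (fun j => ptrace_kron (G j) rho); split=> //; split=> [j | i j].
  exact: psd_ptrace_kron.
by rewrite M_eq mxtrace_kron_mul.
Qed.
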